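(* Let $\mathcal{A}$ be a (finite) activation algebra and $M$ a finite set of morphisms of $\mathcal{T}_\mathcal{A}$. For every $\tau\in M^\omega$: there exists an accepting Safra board run of $\tau$ if and only if $\tau$ describes a path through $\mathcal{T}_\mathcal{A}$ which satisfies the trace condition.
   Context: An activation algebra $\mathcal{A}=(A,\le,\vee,0,\alpha)$ is a finite join-semilattice $(A,\le,\vee)$ with least element $0$, together with a distinguished element $\alpha\in A$ with $\alpha\neq 0$. The category $\mathcal{T}_\mathcal{A}$ has the finite sets as objects; a morphism $R\colon X\to Y$ is a relation $R\subseteq X\times A\times Y$; the composite of $R\colon X\to Y$ and $R'\colon Y\to Z$ is $R'\circ R=\{(x,c,z)\mid \exists y\in Y,\ a,b\in A:\ (x,a,y)\in R,\ (y,b,z)\in R',\ a\vee b=c\}$, and the identity is $1_X=\{(x,0,x)\mid x\in X\}$. A sequence $\tau\in M^\omega$ of morphisms describes a path if $\mathrm{cod}(\tau_i)=\mathrm{dom}(\tau_{i+1})$ for all $i$; write $P(n<m)=\tau_{m-1}\circ\cdots\circ\tau_n$ for $n<m$. Such a path satisfies the trace condition if there exist a strictly increasing sequence $k_0<k_1<\cdots$ of natural numbers and elements $s_i\in\mathrm{dom}(\tau_{k_i})$ with $(s_i,\alpha,s_{i+1})\in P(k_i<k_{i+1})$ for all $i$. Safra boards. Fix a countable set $\mathcal{C}\supseteq\omega$ of chips. A Safra board on $\mathcal{A}$ and a finite set $X$ is a pair $(\Theta,\sigma)$ where the control $\Theta\subseteq\mathcal{C}$ is a finite set with a linear order $\le$,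 and $\sigma\colon X\times A\to\mathcal{P}(\mathcal{P}(\Theta))$, such that every $\gamma\in\Theta$ belongs to some $S\in\sigma(x,a)$. The elements $S\in\sigma(x,a)$ are called stacks (bottom = $\le$-least, top = $\le$-greatest element). A chip $\gamma\in\Theta$ is covered if it is not the top element of any stack $S\in\sigma(x,a)$, for any $x,a$. Transitions between boards: (i) $\tau$-successor, for $\tau\colon X\to Y$, written $(\Theta,\sigma)\xrightarrow{\tau}(\Theta',\sigma')$: first let $\sigma^*(y,a)=\{S\mid S\in\sigma(x,b)\text{ for some }x\in X,b\in A, c\in A \text{ with }(x,c,y)\in\tau\text{ and }a=b\vee c\}$ and let $\Theta^*$ be the set of chips occurring in some stack of $\sigma^*$, with the order inherited from $\Theta$. Then choose a finite linearly ordered $\Theta^\circ\subseteq\mathcal{C}\setminus\Theta$ and a bijection $\iota$ from $\{y\in Y\mid\sigma^*(y,\alpha)\neq\emptyset\}$ onto $\Theta^\circ$, and set $\sigma'(y,\alpha)=\emptyset$, $\sigma'(y,0)=\sigma^*(y,0)\cup\{S\cup\{\iota(y)\}\mid S\in\sigma^*(y,\alpha)\}$, $\sigma'(y,a)=\sigma^*(y,a)$ for $a\notin\{0,\alpha\}$, and $\Theta'=\Theta^*\oplus\Theta^\circ$ (concatenation: all elements of $\Theta^*$ below all elements of $\Theta^\circ$). (ii) Weakening $(\Theta,\sigma)\xrightarrow{W}(\Theta',\sigma')$: a board on the same set with $\sigma'(x,a)\subseteq\sigma(x,a)$ for all $x,a$ and $\Theta'\subseteq\Theta$ (induced order) the set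 of chips still occurring in stacks of $\sigma'$. (iii) $\gamma$-reset for a covered $\gamma\in\Theta$, $(\Theta,\sigma)\xrightarrow{R_\gamma}(\Theta',\sigma')$: for a stack $S$ let $S{\upharpoonright}\gamma=\{z\in S\mid z\le\gamma\}$ if $\gamma\in S$ and $S{\upharpoonright}\gamma=S$ otherwise; $\sigma'(x,a)=\{S{\upharpoonright}\gamma\mid S\in\sigma(x,a)\}$, and $\Theta'$ is the set of chips occurring in stacks of $\sigma'$. (iv) Population $(\Theta,\sigma)\xrightarrow{P}(\Theta,\sigma')$: $\sigma(x,0)\subseteq\sigma'(x,0)\subseteq\sigma(x,0)\cup\{\emptyset\}$ for all $x$ and $\sigma'(x,a)=\sigma(x,a)$ for $a\neq 0$. A run of $\tau\in M^\omega$ is a sequence $(\Theta_i,\sigma_i)_{i\in\omega}$ of boards together with a strictly monotone $\iota\colon\omega\to\omega$ such that for $i=\iota(n)$ one has $(\Theta_i,\sigma_i)\xrightarrow{\tau_n}(\Theta_{i+1},\sigma_{i+1})$, and for $i$ not in the image of $\iota$ the step $(\Theta_i,\sigma_i)\to(\Theta_{i+1},\sigma_{i+1})$ is a weakening, a population, or a $\gamma$-reset for some $\gamma\in\Theta_i$. A run is accepting if there are $N\in\omega$ and $\gamma\in\bigcap_{n\ge N}\Theta_n$ such that the step from index $i$ to $i+1$ is a $\gamma$-reset for infinitely many $i$. *)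

From HB Require Import structures.
From mathcomp Require Import all_boot all_order.
From mathcomp Require Export finmap.
Set Implicit Arguments. Unset Strict Implicit. Unset Printing Implicit Defensive.
Local Open Scope fset_scope.

Section ActivationAlgebra.
Context {disp : Order.disp_t} (A : finTBLatticeType disp) (U : choiceType).

(* Objects of T_A: finite sets {fset U} of an arbitrary universe U.
   A morphism R : X -> Y is the triple (X, R, Y) with R a finite set of
   triples (x, a, y); [wf_mor] says R is contained in X x A x Y. *)
Definition mor := ({fset U} * {fset (U * A * U)} * {fset U})%type.
Definition mdom (m : mor) : {fset U} := m.1.1.
Definition mrel (m : mor) : {fset (U * A * U)} := m.1.2.
Definition mcod (m : mor) : {fset U} := m.2.
Definition wf_mor (m : mor) : Prop :=
  forall x a y, (x, a, y) \in mrel m -> x \in mdom m /\ y \in mcod m.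

(* pathrel tau n k = the relation of tau_(n+k) o ... o tau_n, composed
   with the composition of T_A. *)
Fixpoint pathrel (tau : nat -> mor) (n k : nat) : U -> A -> U -> Prop :=
  match k with
  | 0 => fun x c z => (x, c, z) \in mrel (tau n)
  | k'.+1 => fun x c z => exists y a b,
      pathrel tau n k' x a y /\ (y, b, z) \in mrel (tau (n + k'.+1)%N)
      /\ c = Order.join a b
  end.

(* P(n < m) = tau_(m-1) o ... o tau_n   (meaningful for n < m) *)
Definition Pcomp (tau : nat -> mor) (n m : nat) : U -> A -> U -> Prop :=
  pathrel tau n (m - n).-1.

Definition describes_path (tau : nat -> mor) : Prop :=
  forall i, mcod (tau i) = mdom (tau i.+1).

Definition trace_condition (alpha : A) (tau : nat -> mor) : Prop :=
  exists (k : nat -> nat) (s : nat -> U),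
    (forall i, k i < k i.+1) /\
    (forall i, s i \in mdom (tau (k i))) /\
    (forall i, Pcomp tau (k i) (k i.+1) (s i) alpha (s i.+1)).

Context (alpha : A) (C : countType).

(* A board (Theta, sigma): the linearly ordered finite control Theta is a
   duplicate-free list (order = position in the list); sigma x a is a
   finite set of stacks, a stack being a finite set of chips. *)
Definition board := (seq C * (U -> A -> {fset {fset C}}))%type.

Definition occursP (P : U -> A -> {fset C} -> Prop) (g : C) : Prop :=
  exists x a S, P x a S /\ g \in S.
Definition occurs (s : U -> A -> {fset {fset C}}) (g : C) : Prop :=
  occursP (fun x a S => S \in s x a) g.

Definition is_board (X : {fset U}) (b : board) : Prop :=
  uniq b.1 /\
  (forall x a, x \notin X -> b.2 x a = fset0) /\
  (forall x a S, S \in b.2 x a -> forall g, g \in S -> g \in b.1) /\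
  (forall g, g \in b.1 -> occurs b.2 g).

Definition induced (Th Th' : seq C) (P : C -> Prop) : Prop :=
  subseq Th' Th /\ forall g, g \in Th' <-> P g.

Definition sstar (s : U -> A -> {fset {fset C}}) (t : mor) (y : U) (a : A)
  (S : {fset C}) : Prop :=
  exists x b c, S \in s x b /\ (x, c, y) \in mrel t /\ a = Order.join b c.

Definition succ_step (t : mor) (b b' : board) : Prop :=
  let D := fun y => y \in mcod t /\ exists S, sstar b.2 t y alpha S in
  exists (Thstar Tho : seq C) (iota : U -> C),
    induced b.1 Thstar (occursP (sstar b.2 t)) /\
    uniq Tho /\ (forall g, g \in Tho -> g \notin b.1) /\
    (forall y, D y -> iota y \in Tho) /\
    (forall y y', D y -> D y' -> iota y = iota y' -> y = y') /\
    (forall g, g \in Tho -> exists y, D y /\ iota y = g) /\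
    b'.1 = Thstar ++ Tho /\
    (forall y, b'.2 y alpha = fset0) /\
    (forall y S, S \in b'.2 y Order.bottom <->
        (sstar b.2 t y Order.bottom S \/
         exists S0, sstar b.2 t y alpha S0 /\ S = S0 `|` [fset iota y])) /\
    (forall y a S, a <> Order.bottom -> a <> alpha ->
        (S \in b'.2 y a <-> sstar b.2 t y a S)).

Definition weak_step (b b' : board) : Prop :=
  (forall x a, b'.2 x a `<=` b.2 x a) /\ induced b.1 b'.1 (occurs b'.2).

Definition is_top (Th : seq C) (g : C) (S : {fset C}) : Prop :=
  g \in S /\ forall z, z \in S -> (index z Th <= index g Th)%N.
Definition covered (b : board) (g : C) : Prop :=
  forall x a S, S \in b.2 x a -> ~ is_top b.1 g S.
Definition trunc (Th : seq C) (g : C) (S : {fset C}) : {fset C} :=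
  if g \in S then [fset z in S | (index z Th <= index g Th)%N] else S.
Definition reset_step (g : C) (b b' : board) : Prop :=
  g \in b.1 /\ covered b g /\
  (forall x a, b'.2 x a = [fset trunc b.1 g S | S in b.2 x a]) /\
  induced b.1 b'.1 (occurs b'.2).

Definition pop_step (b b' : board) : Prop :=
  b'.1 = b.1 /\
  (forall x, b.2 x Order.bottom `<=` b'.2 x Order.bottom /\
             b'.2 x Order.bottom `<=` b.2 x Order.bottom `|` [fset fset0]) /\
  (forall x a, a <> Order.bottom -> b'.2 x a = b.2 x a).

(* A run of tau: boards b i, each a board on the set Xs i, with the
   strictly monotone io marking the tau-steps. *)
Definition is_run (tau : nat -> mor) (b : nat -> board) (io : nat -> nat)
  (Xs : nat -> {fset U}) : Prop :=
  (forall n, io n < io n.+1) /\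
  (forall i, is_board (Xs i) (b i)) /\
  (forall n, Xs (io n) = mdom (tau n) /\ Xs (io n).+1 = mcod (tau n) /\
             succ_step (tau n) (b (io n)) (b (io n).+1)) /\
  (forall i, (forall n, io n <> i) ->
     Xs i.+1 = Xs i /\
     (weak_step (b i) (b i.+1) \/ pop_step (b i) (b i.+1) \/
      exists g, g \in (b i).1 /\ reset_step g (b i) (b i.+1))).

Definition accepting (b : nat -> board) (io : nat -> nat) : Prop :=
  exists (N : nat) (g : C),
    (forall n, N <= n -> g \in (b n).1) /\
    (forall m, exists i, m <= i /\ (forall n, io n <> i) /\
                         reset_step g (b i) (b i.+1)).

Definition has_accepting_run (tau : nat -> mor) : Prop :=
  exists (b : nat -> board) (io : nat -> nat) (Xs : nat -> {fset U}),
    is_run tau b io Xs /\ accepting b io.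

End ActivationAlgebra.

From HB Require Import structures.
From mathcomp Require Import all_boot all_order finmap.
From Stdlib Require Import Classical ClassicalEpsilon Lia.
From mathcomp Require Import zify.
Set Implicit Arguments. Unset Strict Implicit. Unset Printing Implicit Defensive.
Import Order.TTheory.
Local Open Scope fset_scope.

(* If a run is accepting, some chip [gam] is present from some time on and
   reset infinitely often.  Stacks containing [gam] form a finitely branching
   tree going backwards in time, so Koenig's lemma gives an infinite branch.
   A reset leaves [gam] on top of the branch's stack, and the next reset needs
   [gam] covered again, which only happens when a [tau]-step pushes a fresh
   chip, i.e. when the label accumulated along the branch reaches [alpha]; the
   segments between such steps witness the trace condition.
   Conversely, along a trace a single stack accumulates the labels of the
   path; whenever it reaches [alpha] a fresh chip is pushed, and if it lies on
   top of an older chip a reset of that older chip removes it again, so the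
   first chip ever pushed is reset infinitely often. *)

Lemma index_subseq_leq (T : eqType) (s s' : seq T) z g :
  uniq s -> subseq s' s -> z \in s' -> g \in s' ->
  (index z s <= index g s)%N -> (index z s' <= index g s')%N.
Proof.
elim: s s' => [|x s IH] s'; first by move=> _; rewrite subseq0 => /eqP ->.
rewrite cons_uniq => /andP[xNs us]; case: s' => [|y s'] //= sub_s's.
case: (y =P x) sub_s's => [->|/eqP yx] sub_s's.
  rewrite !inE; case: (z =P x) => [->|/eqP zx]; first by rewrite /= eqxx.
  case: (g =P x) => [->|/eqP gx] zs gs; first by rewrite eqxx (eq_sym x z) (negbTE zx).
  by rewrite (eq_sym x z) (negbTE zx) (eq_sym x g) (negbTE gx) !ltnS; apply: IH.
move=> zs gs.
have xNs' : x \notin y :: s' by apply: contra xNs => /(mem_subseq sub_s's).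
have zx : z != x by apply: contraNneq xNs' => <-.
have gx : g != x by apply: contraNneq xNs' => <-.
rewrite (eq_sym x z) (negbTE zx) (eq_sym x g) (negbTE gx) ltnS.
exact: (IH (y :: s')).
Qed.

(* The finitary core of Koenig's lemma. *)
Lemma infinite_pigeonhole (T : eqType) (L : seq T) (Q : T -> nat -> Prop) :
  (forall r k k', (k' <= k)%N -> Q r k -> Q r k') ->
  (forall k, exists2 r, r \in L & Q r k) ->
  exists2 r, r \in L & forall k, Q r k.
Proof.
elim: L Q => [|x L IH] Q Qdown QL; first by have [r] := QL 0%N.
have [Qx|/not_all_ex_not[k0 NQx]] := classic (forall k, Q x k).
  by exists x; rewrite ?mem_head.
have QL' k : exists2 r, r \in L & Q r (k + k0)%N.
  have [r] := QL (k + k0)%N; rewrite inE => /orP[/eqP->|rL] Qr; last by exists r.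
  by case: NQx; apply: Qdown Qr; rewrite leq_addl.
have [r rL Qr] := IH _ (fun r k k' le => Qdown r _ _ (leq_add le (leqnn k0))) QL'.
by exists r => [|k]; [rewrite inE rL orbT | apply: Qdown (Qr k); rewrite leq_addr].
Qed.

Lemma pathrel_edges (disp : Order.disp_t) (A : finTBLatticeType disp) (U : choiceType)
  (tau : nat -> mor A U) n j x c z :
  pathrel tau n j x c z -> exists (f : nat -> U) (g : nat -> A),
    [/\ f 0 = x, f j.+1 = z,
        forall l, (l <= j)%N -> (f l, g l, f l.+1) \in mrel (tau (n + l)%N)
      & c = \big[Order.join/Order.bottom]_(l < j.+1) g l].
Proof.
elim: j c z => [|j IH] c z /=.
  move=> e; exists (fun l => if l == 0 then x else z), (fun _ => c).
  split=> // [l|]; first by rewrite leqn0 => /eqP ->; rewrite addn0.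
  by rewrite big_ord_recr big_ord0 /= join0x.
move=> [y [a [b [pa [e ->]]]]]; have [f [g [f0 fj fe ->]]] := IH _ _ pa.
exists (fun l => if (l <= j.+1)%N then f l else z), (fun l => if (l <= j)%N then g l else b).
split=> [||l|]; rewrite ?f0 ?ltnn //.
  by case: (ltngtP l j.+1) => [lt _|//|->]; [rewrite ltnS in lt; rewrite lt fe | rewrite ltnn fj].
rewrite [RHS]big_ord_recr /= ltnn; congr Order.join.
by apply: eq_bigr => i _; rewrite -ltnS ltn_ord.
Qed.

Lemma trunc_subset (C : countType) (Th : seq C) g (S : {fset C}) : trunc Th g S `<=` S.
Proof.
rewrite /trunc; case: ifP => _; last exact: fsubset_refl.
by apply/fsubsetP=> z; rewrite inE => /andP[].
Qed.

Section Soundness.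
Variables (disp : Order.disp_t) (A : finTBLatticeType disp) (alpha : A)
  (U : choiceType) (C : countType)
  (M : {fset mor A U}) (hM : forall m, m \in M -> wf_mor m)
  (tau : nat -> mor A U) (htau : forall n, tau n \in M).
Variables (b : nat -> board A U C) (io : nat -> nat) (Xs : nat -> {fset U}).
Hypothesis run : is_run alpha tau b io Xs.

Lemma run_io n : (io n < io n.+1)%N.
Proof. by case: run. Qed.

Lemma run_board t : is_board (Xs t) (b t).
Proof. by case: run => _ []. Qed.

Lemma run_tau_step n : [/\ Xs (io n) = mdom (tau n), Xs (io n).+1 = mcod (tau n)
  & succ_step alpha (tau n) (b (io n)) (b (io n).+1)].
Proof. by case: run => _ [_ [/(_ n)[? []]]]. Qed.

Lemma run_other_step t : (forall n, io n <> t) -> Xs t.+1 = Xs t /\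
  (weak_step (b t) (b t.+1) \/ pop_step (b t) (b t.+1) \/
   exists2 g, g \in (b t).1 & reset_step g (b t) (b t.+1)).
Proof. by case: run => _ [_ [_ /(_ t)]] step /step[-> [|[|[g []]]]]; auto; eauto 6. Qed.

Lemma io_mono : {mono io : m n / (m <= n)%N}.
Proof. by apply: leq_mono; apply: homo_ltn run_io; exact: ltn_trans. Qed.

Lemma io_ltE m n : (io m < io n)%N = (m < n)%N.
Proof. by rewrite ltnNge io_mono -ltnNge. Qed.

Lemma gap_ind n (P : nat -> Prop) :
  (forall t, (io n < t)%N -> (forall m, io m <> t) -> P t -> P t.+1) ->
  P (io n).+1 -> P (io n.+1).
Proof.
move=> step P1.
have gap d : (io n + d.+1 <= io n.+1)%N -> P (io n + d.+1)%N.
  elim: d => [|d IH] le; first by rewrite addn1.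
  rewrite addnS; apply: step; [lia| |apply: IH; lia].
  move=> m Em; have: (io n < io m < io n.+1)%N by rewrite Em; apply/andP; split; lia.
  by rewrite !io_ltE => /andP[]; lia.
have lt_n := run_io n.
have e : io n.+1 = (io n + (io n.+1 - io n).-1.+1)%N.
  by rewrite prednK ?subn_gt0 // subnKC // ltnW.
by rewrite e; apply: gap; rewrite -e.
Qed.

Lemma run_describes_path : describes_path tau.
Proof.
move=> n; have [<- _ _] := run_tau_step n.+1; apply: esym.
apply: (gap_ind (P := fun t => Xs t = mcod (tau n))); last by case: (run_tau_step n).
by move=> t _ /run_other_step[-> _].
Qed.

Lemma run_index_leq t z g : z \in (b t).1 -> g \in (b t).1 ->
  z \in (b t.+1).1 -> g \in (b t.+1).1 ->
  (index z (b t).1 <= index g (b t).1)%N -> (index z (b t.+1).1 <= index g (b t.+1).1)%N.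
Proof.
move=> z0 g0 z1 g1; have [u0 _] := run_board t.
have [[n et]|not_tau] := classic (exists n, io n = t).
  subst t; have [_ _ [Th [New [_ [[sub _] [_ [fresh [_ [_ [_ [e1 _]]]]]]]]]]] := run_tau_step n.
  have zN : z \notin New by apply/negP => /fresh; rewrite z0.
  have gN : g \notin New by apply/negP => /fresh; rewrite g0.
  move: z1 g1; rewrite e1 !mem_cat (negbTE zN) (negbTE gN) !orbF => z1 g1.
  by rewrite !index_cat z1 g1; apply: index_subseq_leq.
have [_ [[_ [sub _]]|[[e _]|[g' _ [_ [_ [_ [sub _]]]]]]]] :=
  run_other_step (fun n e => not_tau (ex_intro _ n e)).
- exact: index_subseq_leq.
- by rewrite e.
- exact: index_subseq_leq.
Qed.

Hypothesis halpha : alpha <> Order.bottom.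
Variables (N : nat) (gam : C).
Hypothesis gam_from_N : forall t, (N <= t)%N -> gam \in (b t).1.

(* A node [(x, a, S)] at time [t]: a stack [S] of [sigma_t(x, a)] holding [gam]. *)
Definition node := (U * A * {fset C})%type.
Definition live t (v : node) : Prop := v.2 \in (b t).2 v.1.1 v.1.2 /\ gam \in v.2.

Definition node_step t (v w : node) : Prop :=
  ((exists n, io n = t) -> exists n c, [/\ io n = t, (v.1.1, c, w.1.1) \in mrel (tau n) &
      (Order.join v.1.2 c = alpha /\ w.1.2 = Order.bottom) \/
      [/\ Order.join v.1.2 c <> alpha, w.1.2 = Order.join v.1.2 c & w.2 = v.2]]) /\
  ((forall n, io n <> t) -> [/\ w.1.1 = v.1.1, w.1.2 = v.1.2 & w.2 `<=` v.2]).

Lemma live_parent_other t w : (forall n, io n <> t) -> live t.+1 w ->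
  exists2 v, live t v & node_step t v w.
Proof.
case: w => [[y a] S] not_tau [/= Sb gS].
have step v : v.1.1 = y -> v.1.2 = a -> S `<=` v.2 -> node_step t v (y, a, S).
  by move=> <- <- sub; split=> [[m /not_tau]|].
have [_ [[weak _]|[[_ [pop1 pop2]]|[g _ [_ [_ [trunc _]]]]]]] := run_other_step not_tau.
- by exists (y, a, S); [split=> //; apply: (fsubsetP (weak y a)) | apply: step].
- exists (y, a, S); [split=> //= | exact: step].
  case: (a =P Order.bottom) => [ea|nea]; last by rewrite -(pop2 y a nea).
  move: Sb; rewrite ea => /(fsubsetP (proj2 (pop1 y))); rewrite in_fsetU in_fset1.
  by case/orP=> // /eqP eS; rewrite eS in gS.
- move: Sb; rewrite trunc => /imfsetP [S0 /= S0b eS].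
  have sub : S `<=` S0 by rewrite eS trunc_subset.
  by exists (y, a, S0); [split=> //; apply: (fsubsetP sub) | apply: step].
Qed.

Lemma live_parent_tau n w : (N <= io n)%N -> live (io n).+1 w ->
  exists2 v, live (io n) v & node_step (io n) v w.
Proof.
case: w => [[y a] S] le_N [/= Sb gS].
have [_ _ [Th [New [chip [_ [_ [fresh [New_chip [_ [_ [_ [no_alpha [bot other]]]]]]]]]]]]] :=
  run_tau_step n.
have step v c : (v.1.1, c, y) \in mrel (tau n) ->
    (Order.join v.1.2 c = alpha /\ a = Order.bottom) \/
    [/\ Order.join v.1.2 c <> alpha, a = Order.join v.1.2 c & S = v.2] ->
    node_step (io n) v (y, a, S).
  by move=> e vc; split=> [_|/(_ n)//]; exists n, c.
have [ea|nea] := a =P alpha; first by move: Sb; rewrite ea no_alpha in_fset0.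
have [eb|neb] := a =P Order.bottom; last first.
  case/(other y a S neb nea): Sb => x [a0 [c [S_x [e ea]]]].
  exists (x, a0, S); first by split.
  by apply: (step (x, a0, S) c e) => //; right; split; rewrite -?ea.
subst a; move: Sb => /bot[[x [a0 [c [S_x [e ea]]]]]|[S0 [[x [a0 [c [S0_x [e ea]]]]] eS]]].
  exists (x, a0, S); first by split.
  apply: (step (x, a0, S) c e) => //; right.
  by split=> //; rewrite -ea => ebot; apply: halpha.
exists (x, a0, S0); last by apply: (step (x, a0, S0) c e) => //; left.
split=> //=; move: gS; rewrite eS in_fsetU in_fset1 => /orP[//|/eqP eg].
have y_cod : y \in mcod (tau n) by have [] := hM (htau n) e.
have := fresh _ (New_chip y (conj y_cod (ex_intro _ S0 (ex_intro _ x (ex_intro _ a0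
  (ex_intro _ c (conj S0_x (conj e ea)))))))).
by rewrite -eg gam_from_N.
Qed.

Lemma live_parent t w : (N <= t)%N -> live t.+1 w -> exists2 v, live t v & node_step t v w.
Proof.
move=> le_N; have [[n et]|not_tau] := classic (exists n, io n = t).
  by subst t; apply: live_parent_tau.
by apply: live_parent_other => n e; apply: not_tau; exists n.
Qed.

Fixpoint chain t (v : node) k (w : node) : Prop :=
  match k with
  | 0 => w = v /\ live t v
  | k'.+1 => live t v /\ exists2 u, node_step t v u & chain t.+1 u k' w
  end.

Lemma chain_live t v k w : chain t v k w -> live t v.
Proof. by case: k => [[]|k []]. Qed.

Lemma chain_rcons t v k u w : chain t v k u -> node_step (t + k) u w ->
  live (t + k).+1 w -> chain t v k.+1 w.
Proof.
elim: k t v => [|k IH] t v /=; first by move=> [-> lv]; rewrite addn0; split=> //; exists w.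
move=> [lv [u' vu' u'u]] uw lw; split=> //; exists u' => //.
by apply: IH u'u _ _; rewrite addSnnS.
Qed.

Lemma chain_prefix t v k k' w : (k' <= k)%N -> chain t v k w -> exists u, chain t v k' u.
Proof.
elim: k' t v k => [|k' IH] t v k; first by move=> _ /chain_live; exists v.
case: k => [|k] //; rewrite ltnS => le [lv [u vu uw]].
by have [u' uu'] := IH t.+1 u k le uw; exists u'; split=> //; exists u.
Qed.

Lemma live_ancestor t k w : (N <= t)%N -> live (t + k) w -> exists v, chain t v k w.
Proof.
move=> le_N; elim: k w => [|k IH] w; first by rewrite addn0; exists w.
rewrite addnS => lw; have [u /IH[v vu] uw] := live_parent (leq_trans le_N (leq_addr _ _)) lw.
by exists v; apply: chain_rcons uw _.
Qed.

Definition board_nodes t : seq node :=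
  [seq (p, St) | p <- [seq (x, a) | x <- enum_fset (Xs t), a <- enum A],
                St <- enum_fset ((b t).2 p.1 p.2)].

Lemma live_board_nodes t v : live t v -> v \in board_nodes t.
Proof.
case: v => [[x a] S] [/= Sb _].
have x_Xs : x \in Xs t.
  by apply: contraT => xN; have [_ [b0 _]] := run_board t; rewrite b0 in Sb.
apply/allpairsPdep; exists (x, a), S; split=> //.
by apply/allpairsP; exists (x, a); rewrite mem_enum.
Qed.

Definition extendable t v := forall k, exists w, chain t v k w.

Lemma extendable_child t v : extendable t v ->
  exists u, [/\ node_step t v u, live t.+1 u & extendable t.+1 u].
Proof.
move=> ext_v.
have [u _ ext_u] := infinite_pigeonhole (L := board_nodes t.+1)
  (Q := fun u k => node_step t v u /\ exists w, chain t.+1 u k w)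
  (fun u k k' le '(conj vu (ex_intro w uw)) => conj vu (chain_prefix le uw))
  (fun k => match ext_v k.+1 with ex_intro w (conj _ (ex_intro2 u vu uw)) =>
     ex_intro2 _ _ u (live_board_nodes (chain_live uw)) (conj vu (ex_intro _ w uw)) end).
have [vu [w uw]] := ext_u 0%N.
by exists u; split=> // [|k]; [exact: chain_live uw | case: (ext_u k)].
Qed.

Lemma extendable_root : exists v, live N v /\ extendable N v.
Proof.
have live_after k : exists w, live (N + k) w.
  have [_ [_ [_ occ]]] := run_board (N + k).
  by have [x [a [S []]]] := occ gam (gam_from_N (leq_addr _ _)); exists (x, a, S).
have [v _ ext_v] := infinite_pigeonhole (L := board_nodes N)
  (Q := fun v k => exists w, chain N v k w)
  (fun v k k' le '(ex_intro w vw) => chain_prefix le vw)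
  (fun k => match live_after k with ex_intro w lw =>
     match live_ancestor (leqnn N) lw with ex_intro v vw =>
       ex_intro2 _ _ v (live_board_nodes (chain_live vw)) (ex_intro _ w vw) end end).
by exists v; split=> //; have [w /chain_live] := ext_v 0%N.
Qed.

Lemma ex_next_node t v : exists u, extendable t v ->
  [/\ node_step t v u, live t.+1 u & extendable t.+1 u].
Proof.
have [ext_v|] := classic (extendable t v); last by exists v.
by have [u ?] := extendable_child ext_v; exists u.
Qed.

Definition next_node t v := proj1_sig (constructive_indefinite_description _ (ex_next_node t v)).
Definition root_node := proj1_sig (constructive_indefinite_description _ extendable_root).

Fixpoint branch k := if k is k'.+1 then next_node (N + k') (branch k') else root_node.

Lemma branch_extendable k : live (N + k) (branch k) /\ extendable (N + k) (branch k).
Proof.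
elim: k => [|k [_ ext_k]] /=.
  by rewrite addn0 /root_node; case: constructive_indefinite_description.
rewrite /next_node; case: constructive_indefinite_description => u /= /(_ ext_k)[_ lu ext_u].
by rewrite addnS.
Qed.

Lemma branch_step k : node_step (N + k) (branch k) (branch k.+1).
Proof.
have [_ ext_k] := branch_extendable k; rewrite /= /next_node.
by case: constructive_indefinite_description => u /= /(_ ext_k)[].
Qed.

Definition bnode t := branch (t - N).
Definition bpos t := (bnode t).1.1.
Definition blab t := (bnode t).1.2.
Definition bstk t := (bnode t).2.

Lemma bnode_live t : (N <= t)%N -> live t (bnode t).
Proof. by move=> le_N; have [] := branch_extendable (t - N); rewrite subnKC. Qed.

Lemma bnode_step t : (N <= t)%N -> node_step t (bnode t) (bnode t.+1).
Proof. by move=> le_N; have := branch_step (t - N); rewrite subnKC // /bnode subSn. Qed.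

Lemma bnode_other t : (N <= t)%N -> (forall n, io n <> t) ->
  [/\ bpos t.+1 = bpos t, blab t.+1 = blab t & bstk t.+1 `<=` bstk t].
Proof. by move=> le_N not_tau; case: (bnode_step le_N) => _; apply. Qed.

Lemma bstk_board t z : (N <= t)%N -> z \in bstk t -> z \in (b t).1.
Proof.
move=> le_N; have [Sb _] := bnode_live le_N.
by have [_ [_ [chips _]]] := run_board t; apply: chips Sb z.
Qed.

Definition tau_label_spec n c :=
  (N <= io n)%N -> (bpos (io n), c, bpos (io n).+1) \in mrel (tau n) /\
    ((Order.join (blab (io n)) c = alpha /\ blab (io n).+1 = Order.bottom) \/
     [/\ Order.join (blab (io n)) c <> alpha, blab (io n).+1 = Order.join (blab (io n)) c
       & bstk (io n).+1 = bstk (io n)]).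

Lemma ex_tau_label n : exists c, tau_label_spec n c.
Proof.
have [le_N|lt_N] := leqP N (io n); last by exists Order.bottom; rewrite /tau_label_spec leqNgt lt_N.
have [tau_case _] := bnode_step le_N.
have [n' [c [/(incn_inj io_mono) en' ? ?]]] := tau_case (ex_intro _ n erefl).
by subst n'; exists c.
Qed.

Definition tau_label n := proj1_sig (constructive_indefinite_description _ (ex_tau_label n)).

Lemma tau_labelP n : tau_label_spec n (tau_label n).
Proof. by rewrite /tau_label; case: constructive_indefinite_description. Qed.

(* At the [tau]-step [n] the label of the branch reaches [alpha]: its stack
   was extended by a fresh chip. *)
Definition alpha_step n := (N <= io n)%N && (Order.join (blab (io n)) (tau_label n) == alpha).

Lemma bnode_gap n : (N <= io n)%N ->
  bpos (io n.+1) = bpos (io n).+1 /\ blab (io n.+1) = blab (io n).+1.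
Proof.
move=> le_N; apply: (gap_ind (P := fun t => bpos t = _ /\ blab t = _)) => // t lt_t not_tau [<- <-].
by have [-> -> _] := bnode_other (leq_trans le_N (ltnW lt_t)) not_tau.
Qed.

Lemma bstk_shrinks t : (N <= t)%N -> (forall n, io n = t -> ~~ alpha_step n) ->
  bstk t.+1 `<=` bstk t.
Proof.
move=> le_N no_alpha; have [[n et]|not_tau] := classic (exists n, io n = t); last first.
  by have [_ _] := bnode_other le_N (fun n e => not_tau (ex_intro _ n e)).
subst t; move: (no_alpha n erefl); rewrite /alpha_step le_N /=.
by have [_ [[-> _]|[_ _ ->]]] := tau_labelP le_N; rewrite ?eqxx.
Qed.

Lemma gam_top_persists i j : (N <= i)%N -> (i <= j)%N ->
  (forall n, (i <= io n < j)%N -> ~~ alpha_step n) ->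
  is_top (b i).1 gam (bstk i) -> is_top (b j).1 gam (bstk j).
Proof.
move=> le_N le_ij no_alpha top_i.
suff top_d d : (i + d <= j)%N -> is_top (b (i + d)).1 gam (bstk (i + d)).
  by have := top_d (j - i)%N; rewrite subnKC //; apply.
elim: d => [|d IH] le_d; first by rewrite addn0.
have le_Nd : (N <= i + d)%N by apply: leq_trans (leq_addr _ _).
have [gS top] : is_top (b (i + d)).1 gam (bstk (i + d)) by apply: IH; lia.
rewrite addnS.
have sub : bstk (i + d).+1 `<=` bstk (i + d).
  by apply: bstk_shrinks => // n e; apply: no_alpha; rewrite e; apply/andP; split; lia.
have [_ gS1] := bnode_live (leqW le_Nd); split=> // z zS1.
have zS : z \in bstk (i + d) by apply: (fsubsetP sub).
apply: run_index_leq; last exact: top.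
- exact: bstk_board zS.
- exact: gam_from_N.
- exact: bstk_board (leqW le_Nd) zS1.
- exact: gam_from_N (leqW le_Nd).
Qed.

Lemma reset_gam_top i : (N <= i)%N -> reset_step gam (b i) (b i.+1) ->
  is_top (b i.+1).1 gam (bstk i.+1).
Proof.
move=> le_N [_ [_ [trunc_i _]]]; have [Sb1 gS1] := bnode_live (leqW le_N).
move: (Sb1); rewrite trunc_i => /imfsetP [S0 /= S0b eS].
have gS0 : gam \in S0 by apply: (fsubsetP (trunc_subset (b i).1 gam S0)); rewrite -eS.
split=> // z zS1; move: (zS1); rewrite {1}/bstk eS /trunc gS0 inE => /andP [zS0 le_zg].
have [_ [_ [chips _]]] := run_board i.
apply: run_index_leq => //; try exact: chips S0b _ _.
- exact: bstk_board (leqW le_N) zS1.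
- exact: gam_from_N (leqW le_N).
Qed.

Hypothesis gam_reset : forall m, exists2 i, (m <= i)%N & reset_step gam (b i) (b i.+1).

(* A reset puts [gam] on top of the branch stack; before the next reset it
   must be covered again, which only an [alpha]-step can achieve. *)
Lemma alpha_steps_unbounded m : exists n, (m <= n)%N && alpha_step n.
Proof.
apply: NNPP => no_alpha.
have [i le_i reset_i] := gam_reset (maxn N (io m)).
have [j le_j reset_j] := gam_reset i.+1.
have le_Ni : (N <= i)%N by apply: leq_trans le_i; rewrite leq_maxl.
have top_j : is_top (b j).1 gam (bstk j).
  apply: gam_top_persists (reset_gam_top le_Ni reset_i) => //; first exact: leqW.
  move=> n /andP[le_n _]; apply/negP => alpha_n; apply: no_alpha; exists n.
  rewrite alpha_n andbT -io_mono; apply: leq_trans le_n.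
  by apply: leq_trans (leqnSn i); apply: leq_trans le_i; rewrite leq_maxr.
have [Sbj _] := bnode_live (leq_trans le_Ni (leq_trans (leqnSn i) le_j)).
by have [_ [covered_j _]] := reset_j; apply: covered_j Sbj top_j.
Qed.

Definition next_alpha m := ex_minn (alpha_steps_unbounded m).

Lemma next_alphaP m : [/\ (m <= next_alpha m)%N, alpha_step (next_alpha m) &
  forall n, (m <= n)%N -> alpha_step n -> (next_alpha m <= n)%N].
Proof.
rewrite /next_alpha; case: ex_minnP => n /andP[le_mn alpha_n] min_n.
by split=> // n' le_mn' alpha_n'; apply: min_n; rewrite le_mn'.
Qed.

Fixpoint alpha_time i := if i is i'.+1 then next_alpha (alpha_time i').+1 else next_alpha 0.

Lemma alpha_time_alpha i : alpha_step (alpha_time i).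
Proof. by case: i => [|i]; [case: (next_alphaP 0) | case: (next_alphaP (alpha_time i).+1)]. Qed.

Lemma alpha_time_lt i : (alpha_time i < alpha_time i.+1)%N.
Proof. by case: (next_alphaP (alpha_time i).+1). Qed.

Lemma alpha_time_gap i n : (alpha_time i < n < alpha_time i.+1)%N -> ~~ alpha_step n.
Proof.
case/andP=> lt_n lt_n'; apply/negP => alpha_n.
by case: (next_alphaP (alpha_time i).+1) => _ _ /(_ n lt_n alpha_n); rewrite leqNgt lt_n'.
Qed.

Lemma alpha_time_N i n : (alpha_time i <= n)%N -> (N <= io n)%N.
Proof.
move=> le_n; have /andP[le_N _] := alpha_time_alpha i.
by apply: leq_trans le_N _; rewrite io_mono.
Qed.

Lemma blab_after_alpha i : blab (io (alpha_time i).+1) = Order.bottom.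
Proof.
have /andP[le_N /eqP reach] := alpha_time_alpha i.
have [_ e] := bnode_gap le_N; rewrite e.
by have [_ [[_ ->]|[]]] := tau_labelP le_N.
Qed.

Lemma segment_pathrel i j : ((alpha_time i).+1 + j <= alpha_time i.+1)%N ->
  pathrel tau (alpha_time i).+1 j (bpos (io (alpha_time i).+1))
    (Order.join (blab (io ((alpha_time i).+1 + j))) (tau_label ((alpha_time i).+1 + j)))
    (bpos (io ((alpha_time i).+1 + j)).+1).
Proof.
set k := (alpha_time i).+1.
have le_N j' : (N <= io (k + j'))%N by apply: (alpha_time_N (i := i)); rewrite /k; lia.
elim: j => [|j IH] le_j.
  have le_Nk : (N <= io k)%N by have := le_N 0%N; rewrite addn0.
  by rewrite addn0 /= /k blab_after_alpha join0x; have [] := tau_labelP le_Nk.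
have [e_pos e_lab] := bnode_gap (le_N j); rewrite -addnS in e_pos e_lab.
exists (bpos (io (k + j)).+1), (Order.join (blab (io (k + j))) (tau_label (k + j))),
  (tau_label (k + j.+1)).
split; first by apply: IH; lia.
split; first by rewrite -e_pos; case: (tau_labelP (le_N j.+1)).
congr Order.join; rewrite e_lab.
have no_alpha : ~~ alpha_step (k + j) by apply: (alpha_time_gap (i := i)); apply/andP; split; lia.
move: no_alpha; rewrite /alpha_step le_N /=.
by have [_ [[-> _]|[_ -> _]]] := tau_labelP (le_N j); rewrite ?eqxx.
Qed.

Lemma run_trace_condition : trace_condition alpha tau.
Proof.
exists (fun i => (alpha_time i).+1), (fun i => bpos (io (alpha_time i).+1)).
split=> [i|]; first by rewrite ltnS alpha_time_lt.
split=> [i|i].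
  have le_N : (N <= io (alpha_time i).+1)%N by apply: (alpha_time_N (i := i)).
  have [Sb _] := bnode_live le_N; have [_ [b0 _]] := run_board (io (alpha_time i).+1).
  have [<- _ _] := run_tau_step (alpha_time i).+1.
  by apply: contraT => xN; rewrite b0 in Sb.
have lt_i := alpha_time_lt i.
have e : ((alpha_time i).+1 + ((alpha_time i.+1).+1 - (alpha_time i).+1).-1 = alpha_time i.+1)%N.
  by lia.
rewrite /Pcomp.
have := segment_pathrel (i := i) (j := ((alpha_time i.+1).+1 - (alpha_time i).+1).-1).
rewrite e leqnn => /(_ isT).
have /andP[le_N /eqP ->] := alpha_time_alpha i.+1.
by have [-> _] := bnode_gap le_N.
Qed.
End Soundness.

Lemma soundness (disp : Order.disp_t) (A : finTBLatticeType disp)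
  (alpha : A) (halpha : alpha <> Order.bottom)
  (U : choiceType) (C : countType)
  (M : {fset mor A U}) (hM : forall m, m \in M -> wf_mor m)
  (tau : nat -> mor A U) (htau : forall n, tau n \in M) :
  has_accepting_run alpha C tau -> describes_path tau /\ trace_condition alpha tau.
Proof.
case=> b [io [Xs [run [N [gam [gam_from_N gam_reset]]]]]].
split; first exact: run_describes_path run.
apply: (run_trace_condition hM htau run halpha gam_from_N) => m.
by have [i [le_i [_ reset_i]]] := gam_reset m; exists i.
Qed.

Section StackBoards.
Variables (disp : Order.disp_t) (A : finTBLatticeType disp) (alpha : A)
  (U : choiceType) (C : countType).

Definition chip_set (Th : seq C) : {fset C} := seq_fset tt Th.

Lemma chip_setE Th z : (z \in chip_set Th) = (z \in Th).
Proof. exact: seq_fsetE. Qed.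

Lemma chip_set_rcons (Th : seq C) g : chip_set (rcons Th g) = chip_set Th `|` [fset g].
Proof. by apply/fsetP=> z; rewrite in_fsetU in_fset1 !chip_setE mem_rcons inE orbC. Qed.

Definition stack_board (x : U) (a : A) (Th : seq C) : board A U C :=
  (Th, fun y a' => if (y == x) && (a' == a) then [fset chip_set Th] else fset0).
Definition empty_board : board A U C := ([::], fun _ _ => fset0).

Lemma stack_board_mem x a Th y a' S :
  (S \in (stack_board x a Th).2 y a') = [&& y == x, a' == a & S == chip_set Th].
Proof. by rewrite /=; case: (y == x); case: (a' == a); rewrite ?in_fset1 ?in_fset0. Qed.

Lemma occurs_stack_board x a Th g : occurs (stack_board x a Th).2 g <-> g \in Th.
Proof.
split=> [[y [a' [S []]]]|g_Th].
  by rewrite stack_board_mem => /and3P[_ _ /eqP->]; rewrite chip_setE.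
by exists x, a, (chip_set Th); rewrite stack_board_mem !eqxx chip_setE.
Qed.

Lemma is_board_stack X x a Th : uniq Th -> x \in X -> is_board X (stack_board x a Th).
Proof.
move=> uTh xX; split=> //; split=> [y a' yNX|].
  by rewrite /=; case: eqP => // ey; rewrite ey xX in yNX.
split=> [y a' S|g /occurs_stack_board //].
by rewrite stack_board_mem => /and3P[_ _ /eqP->] g; rewrite chip_setE.
Qed.

Lemma is_board_empty X : is_board X empty_board.
Proof. by split=> //; split=> //; split=> // g []. Qed.

Lemma weak_stack_board x a Th : weak_step (stack_board x a Th) (stack_board x a Th).
Proof.
split=> [x' a'|]; first exact: fsubset_refl.
by split=> [|g]; [exact: subseq_refl | split=> /occurs_stack_board].
Qed.

Lemma weak_empty_board : weak_step empty_board empty_board.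
Proof. by split=> //; split=> // g; split=> // -[? [? [? []]]]. Qed.

Lemma sstar_stack_board x a Th t y a' S : sstar (stack_board x a Th).2 t y a' S <->
  S = chip_set Th /\ exists2 c, (x, c, y) \in mrel t & a' = Order.join a c.
Proof.
split=> [[x' [b [c []]]]|[-> [c e ->]]]; last by exists x, a, c; rewrite stack_board_mem !eqxx.
by rewrite stack_board_mem => /and3P[/eqP-> /eqP-> /eqP->] [e ->]; split=> //; exists c.
Qed.

Lemma succ_empty_board (g0 : C) t : succ_step alpha t empty_board empty_board.
Proof.
have no_sstar y a S : ~ sstar empty_board.2 t y a S by case=> [? [? [? []]]].
exists [::], [::], (fun _ => g0).
split; first by split=> // g; split=> // [[y [a [S [/no_sstar]]]]].
do 2 (split=> //); split; first by move=> y [_ [S /no_sstar]].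
split; first by move=> y y' [_ [S /no_sstar]].
do 3 (split=> //); split=> [y S|y a S _ _]; last by split=> // /no_sstar.
by split=> // -[/no_sstar|[S0 [/no_sstar]]].
Qed.

Lemma pop_empty_board x : pop_step empty_board (stack_board x Order.bottom [::]).
Proof.
split=> //; split=> [y|y a na /=]; last by case: eqP => //= _; case: eqP.
split; first exact: fsub0set.
apply/fsubsetP=> S; rewrite stack_board_mem fset0U in_fset1 => /and3P[_ _ /eqP->].
by apply/eqP/fsetP=> z; rewrite chip_setE.
Qed.

Lemma reset_stack_board x a (g0 g1 : C) : g0 != g1 ->
  reset_step g0 (stack_board x a [:: g0; g1]) (stack_board x a [:: g0]).
Proof.
move=> g01.
have trunc_g0 : trunc [:: g0; g1] g0 (chip_set [:: g0; g1]) = chip_set [:: g0].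
  apply/fsetP=> z; rewrite /trunc (chip_setE _ g0) mem_head !inE !chip_setE !inE /= eqxx.
  by case: (z =P g0) => [->|/eqP zg0] /=; rewrite ?eqxx // (eq_sym g0 z) (negbTE zg0) andbF.
split; first exact: mem_head.
split=> [y a' S|].
  rewrite stack_board_mem => /and3P[_ _ /eqP->] [_ /(_ g1)].
  by rewrite chip_setE !inE eqxx orbT /= !eqxx (negbTE g01) => /(_ isT).
split=> [y a' /=|]; last by split=> [/=|g]; [rewrite eqxx | split=> /occurs_stack_board].
case: ((y == x) && (a' == a)); last by rewrite imfset0.
apply/fsetP=> S'; rewrite in_fset1; apply/eqP/imfsetP=> [->|[S /=]].
  by exists (chip_set [:: g0; g1]); rewrite ?in_fset1 ?trunc_g0.
by rewrite in_fset1 => /eqP-> ->.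
Qed.
End StackBoards.

Section Completeness.
Variables (disp : Order.disp_t) (A : finTBLatticeType disp)
  (alpha : A) (halpha : alpha <> Order.bottom)
  (U : choiceType) (C : countType) (emb : nat -> C) (emb_inj : injective emb)
  (M : {fset mor A U}) (hM : forall m, m \in M -> wf_mor m)
  (tau : nat -> mor A U) (htau : forall n, tau n \in M).
Hypothesis tau_path : describes_path tau.
Variables (k : nat -> nat) (s : nat -> U).
Hypotheses (k_lt : forall i, (k i < k i.+1)%N)
  (k_trace : forall i, Pcomp tau (k i) (k i.+1) (s i) alpha (s i.+1)).

Lemma tau_wf n x c y : (x, c, y) \in mrel (tau n) -> x \in mdom (tau n) /\ y \in mcod (tau n).
Proof. exact: hM (htau n) x c y. Qed.

Definition seg_len i := (k i.+1 - k i).-1.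

Lemma k_seg_len i : k i.+1 = (k i + (seg_len i).+1)%N.
Proof. by rewrite /seg_len prednK ?subn_gt0 // subnKC // ltnW. Qed.

Lemma k_mono : {mono k : i j / (i <= j)%N}.
Proof. by apply: leq_mono; apply: homo_ltn k_lt; exact: ltn_trans. Qed.

Lemma k_ge i : (k 0 + i <= k i)%N.
Proof. by elim: i => [|i IH]; rewrite ?addn0 // addnS; apply: leq_ltn_trans IH (k_lt i). Qed.

Lemma ex_seg_edges i : exists fg : (nat -> U) * (nat -> A),
  [/\ fg.1 0 = s i, fg.1 (seg_len i).+1 = s i.+1,
      forall l, (l <= seg_len i)%N -> (fg.1 l, fg.2 l, fg.1 l.+1) \in mrel (tau (k i + l)%N)
    & alpha = \big[Order.join/Order.bottom]_(l < (seg_len i).+1) fg.2 l].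
Proof. by have [f [g ?]] := pathrel_edges (k_trace i); exists (f, g). Qed.

Definition seg_edges i := proj1_sig (constructive_indefinite_description _ (ex_seg_edges i)).

Lemma seg_edgesP i :
  [/\ (seg_edges i).1 0 = s i, (seg_edges i).1 (seg_len i).+1 = s i.+1,
      forall l, (l <= seg_len i)%N ->
        ((seg_edges i).1 l, (seg_edges i).2 l, (seg_edges i).1 l.+1) \in mrel (tau (k i + l)%N)
    & alpha = \big[Order.join/Order.bottom]_(l < (seg_len i).+1) (seg_edges i).2 l].
Proof. by rewrite /seg_edges; case: constructive_indefinite_description. Qed.

Lemma ex_k_gt n : exists i, (n < k i)%N.
Proof. by exists n.+1; have := k_ge n.+1; lia. Qed.

(* The segment [k i <= n < k i.+1] containing [n]; junk for [n < k 0]. *)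
Definition segment_of n := (ex_minn (ex_k_gt n)).-1.

Lemma segment_ofP n : (k 0 <= n)%N -> (k (segment_of n) <= n < k (segment_of n).+1)%N.
Proof.
rewrite /segment_of; case: ex_minnP => [[|i] lt_n min_i le_n /=].
  by rewrite ltnNge le_n in lt_n.
by rewrite lt_n andbT leqNgt; apply/negP => /min_i; rewrite ltnn.
Qed.

Lemma segment_of_uniq n i : (k i <= n < k i.+1)%N -> segment_of n = i.
Proof.
case/andP=> le_n lt_n.
have /andP[le_n' lt_n'] : (k (segment_of n) <= n < k (segment_of n).+1)%N.
  by apply: segment_ofP; apply: leq_trans le_n; rewrite k_mono.
apply/eqP; rewrite eqn_leq -[(segment_of n <= i)%N]ltnS -[(i <= segment_of n)%N]ltnS.
by rewrite -(leqW_mono k_mono _ i.+1) -(leqW_mono k_mono i); apply/andP; split; lia.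
Qed.

(* The path of the trace, one vertex and one label per [tau]-step from [k 0] on. *)
Definition vtx n := (seg_edges (segment_of n)).1 (n - k (segment_of n)).
Definition lbl n := (seg_edges (segment_of n)).2 (n - k (segment_of n)).

Lemma vtx_lbl_seg i l : (l <= seg_len i)%N ->
  vtx (k i + l) = (seg_edges i).1 l /\ lbl (k i + l) = (seg_edges i).2 l.
Proof.
move=> le_l; rewrite /vtx /lbl; have -> : segment_of (k i + l) = i.
  by apply: segment_of_uniq; rewrite leq_addr /= k_seg_len; lia.
by rewrite addKn.
Qed.

Lemma vtx_seg i l : (l <= (seg_len i).+1)%N -> vtx (k i + l) = (seg_edges i).1 l.
Proof.
rewrite leq_eqVlt ltnS => /orP[/eqP->|le_l]; last by have [] := vtx_lbl_seg le_l.
have [_ -> _ _] := seg_edgesP i; rewrite -k_seg_len -[k i.+1]addn0.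
by have [-> _] := vtx_lbl_seg (leq0n (seg_len i.+1)); have [] := seg_edgesP i.+1.
Qed.

Lemma trace_edge n : (k 0 <= n)%N -> (vtx n, lbl n, vtx n.+1) \in mrel (tau n).
Proof.
move=> le_n; have /andP[le_i lt_i] := segment_ofP le_n; set i := segment_of n in le_i lt_i.
rewrite -(subnKC le_i) -addnS; set l := (n - k i)%N.
have le_l : (l <= seg_len i)%N by move: lt_i; rewrite k_seg_len /l; lia.
have [-> ->] := vtx_lbl_seg le_l; rewrite vtx_seg //.
by have [_ _ e _] := seg_edgesP i; apply: e.
Qed.

Lemma lbl_le_alpha n : (k 0 <= n)%N -> (lbl n <= alpha)%O.
Proof.
move=> le_n; have /andP[le_i lt_i] := segment_ofP le_n; set i := segment_of n in le_i lt_i.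
rewrite -(subnKC le_i); set l := (n - k i)%N.
have lt_l : (l < (seg_len i).+1)%N by move: lt_i; rewrite k_seg_len /l; lia.
have [_ ->] := vtx_lbl_seg (ltnSE lt_l); have [_ _ _ ->] := seg_edgesP i.
by rewrite (bigD1 (Ordinal lt_l)) //= leUl.
Qed.

Lemma seg_join i : \big[Order.join/Order.bottom]_(l < (seg_len i).+1) lbl (k i + l) = alpha.
Proof.
have [_ _ _ ->] := seg_edgesP i; apply: eq_bigr => l _.
by have [_ ->] := vtx_lbl_seg (ltnSE (ltn_ord l)).
Qed.

(* A chip is tagged with the step creating it, which makes it fresh. *)
Definition chip n (y : U) : C := emb (choice.pickle (n, index y (enum_fset (mcod (tau n))))).

Lemma chip_inj n : {in mcod (tau n) &, injective (chip n)}.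
Proof.
move=> y y' y_cod y'_cod /emb_inj /(pcan_inj (@choice.pickleK_inv _)) [e].
by rewrite -(nth_index y y_cod) e nth_index.
Qed.

Definition chips_before n (Th : seq C) :=
  forall g, g \in Th -> exists m i : nat, (m < n)%N /\ g = emb (choice.pickle (m, i)).

Lemma chips_beforeW n Th : chips_before n Th -> chips_before n.+1 Th.
Proof. by move=> old g /old[m [i [lt_m ->]]]; exists m, i; split=> //; apply: ltnW. Qed.

Lemma chip_notin n Th y : chips_before n Th -> chip n y \notin Th.
Proof.
move=> old; apply/negP => /old[m [i [lt_m /emb_inj /(pcan_inj (@choice.pickleK_inv _)) [e _]]]].
by rewrite e ltnn in lt_m.
Qed.

Definition reach n (a : A) (y : U) (a' : A) : bool :=
  [exists c : A, ((vtx n, c, y) \in mrel (tau n)) && (Order.join a c == a')].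

Lemma reachP n a y a' :
  reflect (exists2 c, (vtx n, c, y) \in mrel (tau n) & Order.join a c = a') (reach n a y a').
Proof.
apply: (iffP existsP) => [[c /andP[e /eqP <-]]|[c e <-]]; first by exists c.
by exists c; rewrite e eqxx.
Qed.

Lemma reach_cod n a y a' : reach n a y a' -> y \in mcod (tau n).
Proof. by case/reachP=> c /tau_wf[]. Qed.

Lemma reach_trace n a : (k 0 <= n)%N -> reach n a (vtx n.+1) (Order.join a (lbl n)).
Proof. by move=> le_n; apply/reachP; exists (lbl n); rewrite ?trace_edge. Qed.

Definition new_chips n (a : A) : seq C :=
  [seq chip n y | y <- enum_fset (mcod (tau n)) & reach n a y alpha].

Lemma new_chips_uniq n a : uniq (new_chips n a).
Proof.
rewrite map_inj_in_uniq; first exact/filter_uniq/fset_uniq.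
by move=> y y'; rewrite !mem_filter => /andP[_ y_cod] /andP[_ y'_cod]; apply: chip_inj.
Qed.

Lemma new_chipsP n a g :
  g \in new_chips n a <-> exists2 y, reach n a y alpha & g = chip n y.
Proof.
split=> [/mapP[y]|[y reach_y ->]]; first by rewrite mem_filter => /andP[reach_y _] ->; exists y.
by apply: map_f; rewrite mem_filter reach_y /= (reach_cod reach_y).
Qed.

Definition succ_board n (a : A) (Th : seq C) : board A U C :=
  (Th ++ new_chips n a, fun y a' =>
    if a' == alpha then fset0
    else if a' == Order.bottom then
      ((if reach n a y Order.bottom then [fset chip_set Th] else fset0) `|`
       (if reach n a y alpha then [fset chip_set Th `|` [fset chip n y]] else fset0))
    else if reach n a y a' then [fset chip_set Th] else fset0).

Lemma succ_board_mem n a Th y a' S : S \in (succ_board n a Th).2 y a' <->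
  a' <> alpha /\ ((reach n a y a' /\ S = chip_set Th) \/
    [/\ a' = Order.bottom, reach n a y alpha & S = chip_set Th `|` [fset chip n y]]).
Proof.
rewrite /=; case: (a' =P alpha) => [ea|na]; first by rewrite in_fset0; split=> // -[/(_ ea)].
case: (a' =P Order.bottom) => [eb|nb].
  subst a'; rewrite in_fsetU; split; last first.
    by case=> _ [[r ->]|[_ r ->]]; rewrite r in_fset1 eqxx ?orbT.
  case/orP; case: ifP => r; rewrite ?in_fset1 ?in_fset0 // => /eqP->.
    by split=> //; left.
  by split=> //; right.
case: (reach n a y a'); rewrite ?in_fset1 ?in_fset0; split.
- by move/eqP->; split=> //; left.
- by case=> _ [[_ ->]|[]] //; rewrite eqxx.
- by [].
- by case=> _ [[]|[]].
Qed.

Lemma sstar_reach n a (Th : seq C) y a' S :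
  sstar (stack_board (vtx n) a Th).2 (tau n) y a' S <-> S = chip_set Th /\ reach n a y a'.
Proof.
rewrite sstar_stack_board; split=> [[-> [c e ->]]|[-> /reachP[c e <-]]].
  by split=> //; apply/reachP; exists c.
by split=> //; exists c.
Qed.

Lemma bottom_neq_alpha : Order.bottom <> alpha.
Proof. by move=> e; apply: halpha. Qed.

Lemma succ_step_stack_board n a Th : (k 0 <= n)%N -> chips_before n Th ->
  succ_step alpha (tau n) (stack_board (vtx n) a Th) (succ_board n a Th).
Proof.
move=> le_n old.
have D y : (y \in mcod (tau n) /\ exists S, sstar (stack_board (vtx n) a Th).2 (tau n) y alpha S)
    <-> reach n a y alpha.
  split=> [[_ [S /sstar_reach[_ //]]]|r]; split; first exact: reach_cod r.
  by exists (chip_set Th); apply/sstar_reach.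
exists Th, (new_chips n a), (chip n).
split.
  split=> [|g]; first exact: subseq_refl.
  split=> [g_Th|[y [a' [S [/sstar_reach[-> _]]]]]]; last by rewrite chip_setE.
  exists (vtx n.+1), (Order.join a (lbl n)), (chip_set Th); rewrite chip_setE.
  by split=> //; apply/sstar_reach; rewrite reach_trace.
split; first exact: new_chips_uniq.
split; first by move=> g /new_chipsP[y _ ->]; apply: chip_notin.
split; first by move=> y /D r; apply/new_chipsP; exists y.
split; first by move=> y y' /D/reach_cod y_cod /D/reach_cod y'_cod; apply: chip_inj.
split; first by move=> g /new_chipsP[y r ->]; exists y; split=> //; apply/D.
do 2 (split=> //=); first by move=> y; rewrite eqxx.
split=> [y S|y a' S nb na]; rewrite succ_board_mem.
  split=> [[_ [[r ->]|[_ r ->]]]|[/sstar_reach[-> r]|[S0 [/sstar_reach[-> r] ->]]]].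
  - by left; apply/sstar_reach.
  - by right; exists (chip_set Th); split=> //; apply/sstar_reach.
  - by split; [exact: bottom_neq_alpha | left].
  - by split; [exact: bottom_neq_alpha | right].
split=> [[_ [[r ->]|[]]] //|/sstar_reach[-> r]]; first exact/sstar_reach.
by split=> //; left.
Qed.

Lemma is_board_succ n a Th : (k 0 <= n)%N -> uniq Th -> chips_before n Th ->
  is_board (mcod (tau n)) (succ_board n a Th).
Proof.
move=> le_n uTh old.
have cod y a' S : S \in (succ_board n a Th).2 y a' -> y \in mcod (tau n).
  by case/succ_board_mem=> _ [[/reach_cod]|[_ /reach_cod]].
split.
  rewrite cat_uniq uTh new_chips_uniq andbT /=.
  by apply/hasPn => g /new_chipsP[y _ ->]; apply: chip_notin.
split=> [y a' yN|].
  by apply/fsetP=> S; rewrite in_fset0; apply/negP => /cod; rewrite (negbTE yN).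
split=> [y a' S /succ_board_mem[_ [[_ ->]|[_ r ->]]] g|g].
- by rewrite /= mem_cat chip_setE => ->.
- rewrite in_fsetU chip_setE in_fset1 /= mem_cat => /orP[->//|/eqP->].
  by apply/orP; right; apply/new_chipsP; exists y.
rewrite /= mem_cat => /orP[g_Th|/new_chipsP[y r ->]]; last first.
  exists y, Order.bottom, (chip_set Th `|` [fset chip n y]); split.
    by apply/succ_board_mem; split; [exact: bottom_neq_alpha | right].
  by rewrite in_fsetU in_fset1 eqxx orbT.
have [reach_alpha|Nreach_alpha] := eqVneq (Order.join a (lbl n)) alpha.
  exists (vtx n.+1), Order.bottom, (chip_set Th `|` [fset chip n (vtx n.+1)]).
  split; last by rewrite in_fsetU chip_setE g_Th.
  apply/succ_board_mem; split; first exact: bottom_neq_alpha.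
  by right; split=> //; rewrite -reach_alpha reach_trace.
exists (vtx n.+1), (Order.join a (lbl n)), (chip_set Th); split; last by rewrite chip_setE.
by apply/succ_board_mem; split; [apply/eqP | left; rewrite reach_trace].
Qed.

(* Label and chips of the single stack of the run after [j] steps from [k 0].
   When the label reaches [alpha] a fresh chip is pushed and the label
   restarts at [bottom]; a second chip is removed by a reset of the first. *)
Definition hits_alpha j (q : A * seq C) : bool := Order.join q.1 (lbl (k 0 + j)) == alpha.

Definition advance j (q : A * seq C) : A * seq C :=
  if hits_alpha j q then (Order.bottom, rcons q.2 (chip (k 0 + j) (vtx (k 0 + j).+1)))
  else (Order.join q.1 (lbl (k 0 + j)), q.2).

Definition reset_top (Th : seq C) := if size Th == 2 then take 1 Th else Th.

Fixpoint state j : A * seq C :=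
  if j is j'.+1 then ((advance j' (state j')).1, reset_top (advance j' (state j')).2)
  else (Order.bottom, [::]).

Definition state_inv n (q : A * seq C) :=
  [/\ uniq q.2, (size q.2 <= 1)%N, chips_before n q.2 & (q.1 <= alpha)%O].

Lemma advance_inv j q : state_inv (k 0 + j) q ->
  [/\ uniq (advance j q).2, (size (advance j q).2 <= 2)%N,
      chips_before (k 0 + j).+1 (advance j q).2 & ((advance j q).1 <= alpha)%O].
Proof.
case=> uq sz old le_a; rewrite /advance; case: ifP => _ /=; last first.
  by split=> //; [lia | exact: chips_beforeW | rewrite leUx le_a lbl_le_alpha ?leq_addr].
split; [|by rewrite size_rcons; lia| |exact: le0x].
  by rewrite rcons_uniq uq andbT chip_notin.
move=> g; rewrite mem_rcons inE => /orP[/eqP->|/(chips_beforeW old)//].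
by exists (k 0 + j)%N, (index (vtx (k 0 + j).+1) (enum_fset (mcod (tau (k 0 + j))))).
Qed.

Lemma stateP j : state_inv (k 0 + j) (state j).
Proof.
elim: j => [|j IH]; first by split=> //; exact: le0x.
have [uq sz old le_a] := advance_inv IH; rewrite /= /reset_top addnS.
case: ifP => [/eqP sz2|/negbT sz2]; split=> //.
- exact: subseq_uniq (take_subseq _ _) uq.
- by rewrite size_take sz2.
- by move=> g /(mem_subseq (take_subseq _ _)) /old.
- by move: sz sz2; case: (size _) => [|[|[]]].
Qed.

Lemma stateP_at n : (k 0 <= n)%N -> state_inv n (state (n - k 0)).
Proof. by move=> le_n; have := stateP (n - k 0); rewrite subnKC. Qed.

(* Along each segment of the trace the label accumulates to [alpha]. *)
Lemma hits_alpha_unbounded m : exists2 j, (m <= j)%N & hits_alpha j (state j).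
Proof.
apply: NNPP => no_hit.
have miss j : (m <= j)%N -> ~~ hits_alpha j (state j).
  by move=> le_j; apply/negP => hit; apply: no_hit; exists j.
set j0 := (k m - k 0)%N.
have e_j0 : (k 0 + j0)%N = k m by rewrite subnKC // k_mono.
have le_j0 : (m <= j0)%N by have := k_ge m; rewrite /j0; lia.
have lab l : (l <= (seg_len m).+1)%N ->
    (state (j0 + l)).1 =
    Order.join (state j0).1 (\big[Order.join/Order.bottom]_(l' < l) lbl (k m + l')).
  elim: l => [|l IH] le_l; first by rewrite addn0 big_ord0 joinx0.
  have := miss (j0 + l)%N (leq_trans le_j0 (leq_addr _ _)).
  rewrite addnS /= /advance => /negbTE->; rewrite IH 1?ltnW // big_ord_recr /= joinA.
  by rewrite addnA e_j0.
have := miss (j0 + seg_len m)%N (leq_trans le_j0 (leq_addr _ _)).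
rewrite /hits_alpha lab 1?leqW // addnA e_j0 -joinA.
rewrite -(big_ord_recr (seg_len m) (fun l => lbl (k m + l))) seg_join.
by have [_ _ _ /join_r->] := stateP j0; rewrite eqxx.
Qed.

Lemma state_hit_nonempty j : hits_alpha j (state j) -> (state j.+1).2 != [::].
Proof.
move=> hit; rewrite /= /advance hit /= /reset_top.
by case: ifP; case: (state j).2.
Qed.

Lemma state_stable j : (state j).2 != [::] -> (state j.+1).2 = (state j).2.
Proof.
have [_ sz _ _] := stateP j; rewrite /= /advance /reset_top.
by move: sz; case: (state j).2 => [|g [|g' Th]] //= _ _; case: hits_alpha.
Qed.

(* The boards of the run around the [tau]-step [n]: before it, right after
   it, and after weakening back to the single stack. *)
Definition run_in n : board A U C := if (n < k 0)%N then empty_board A U C else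
  stack_board (vtx n) (state (n - k 0)).1 (state (n - k 0)).2.
Definition run_mid n : board A U C := if (n < k 0)%N then empty_board A U C else
  succ_board n (state (n - k 0)).1 (state (n - k 0)).2.
Definition run_out n : board A U C := if (n < k 0)%N then empty_board A U C else
  stack_board (vtx n.+1) (advance (n - k 0) (state (n - k 0))).1
    (advance (n - k 0) (state (n - k 0))).2.

Lemma is_board_run_in n : is_board (mdom (tau n)) (run_in n).
Proof.
rewrite /run_in; case: ltnP => le_n; first exact: is_board_empty.
have [uq _ _ _] := stateP_at le_n.
by apply: is_board_stack => //; have [] := tau_wf (trace_edge le_n).
Qed.

Lemma is_board_run_mid n : is_board (mcod (tau n)) (run_mid n).
Proof.
rewrite /run_mid; case: ltnP => le_n; first exact: is_board_empty.
by have [uq _ old _] := stateP_at le_n; apply: is_board_succ.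
Qed.

Lemma is_board_run_out n : is_board (mcod (tau n)) (run_out n).
Proof.
rewrite /run_out; case: ltnP => le_n; first exact: is_board_empty.
have [uq _ _ _] := advance_inv (stateP (n - k 0)).
by apply: is_board_stack => //; have [] := tau_wf (trace_edge le_n).
Qed.

Lemma succ_step_run n : succ_step alpha (tau n) (run_in n) (run_mid n).
Proof.
rewrite /run_in /run_mid; case: ltnP => le_n; first exact: (succ_empty_board alpha (emb 0) (tau n)).
by have [_ _ old _] := stateP_at le_n; apply: succ_step_stack_board.
Qed.

Lemma weak_step_run n : weak_step (run_mid n) (run_out n).
Proof.
rewrite /run_mid /run_out; case: ltnP => le_n; first exact: weak_empty_board.
have e_n : (k 0 + (n - k 0))%N = n by rewrite subnKC.
split=> [y a|].
  apply/fsubsetP => S; rewrite stack_board_mem => /and3P[/eqP-> /eqP-> /eqP->].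
  apply/succ_board_mem; rewrite /advance /hits_alpha e_n; case: ifP => [/eqP hit|miss] /=.
    split; first exact: bottom_neq_alpha.
    by right; split; rewrite ?chip_set_rcons // -hit reach_trace.
  by split; [apply/eqP; rewrite miss | left; rewrite reach_trace].
split=> [|g]; last by split=> /occurs_stack_board.
rewrite /advance /hits_alpha e_n; case: ifP => [/eqP hit|_] /=; last exact: prefix_subseq.
rewrite -cats1; apply: cat_subseq; first exact: subseq_refl.
by rewrite sub1seq; apply/new_chipsP; exists (vtx n.+1); rewrite -?hit ?reach_trace.
Qed.

Lemma run_out_step n : weak_step (run_out n) (run_in n.+1) \/ pop_step (run_out n) (run_in n.+1) \/
  exists g, g \in (run_out n).1 /\ reset_step g (run_out n) (run_in n.+1).
Proof.
rewrite /run_out /run_in; case: (ltnP n (k 0)) => le_n.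
  case: (ltnP n.+1 (k 0)) => lt_n1; first by left; exact: weak_empty_board.
  have -> : n.+1 = k 0 by apply/eqP; rewrite eqn_leq lt_n1 le_n.
  by right; left; rewrite subnn; apply: pop_empty_board.
rewrite ltnNge (leqW le_n) /= subSn //=.
set q := advance (n - k 0) (state (n - k 0)); rewrite /reset_top.
case: ifP => [sz2|_]; last by left; exact: weak_stack_board.
have [uq _ _ _] := advance_inv (stateP (n - k 0)).
move: sz2 uq; rewrite -/q; case: q.2 => [|g0 [|g1 [|g2 Th]]] //= _.
rewrite inE andbT => g01; right; right; exists g0.
by split; [exact: mem_head | exact: reset_stack_board].
Qed.

Lemma state_eventually_single :
  exists j0 (gam : C), forall j, (j0 <= j)%N -> (state j).2 = [:: gam].
Proof.
have [j1 _ /state_hit_nonempty ne] := hits_alpha_unbounded 0.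
have [_ sz _ _] := stateP j1.+1.
have [gam e] : exists gam, (state j1.+1).2 = [:: gam].
  by move: ne sz; case: (state j1.+1).2 => [|g [|]] //; exists g.
exists j1.+1, gam => j le_j; rewrite -(subnKC le_j); elim: (j - j1.+1)%N => [|d IH].
  by rewrite addn0.
by rewrite addnS state_stable IH.
Qed.

Lemma reset_run_out j gam : hits_alpha j (state j) -> (state j).2 = [:: gam] ->
  reset_step gam (run_out (k 0 + j)) (run_in (k 0 + j).+1).
Proof.
move=> hit e; have [uq _ _ _] := advance_inv (stateP j).
rewrite /run_out /run_in ltnNge leq_addr ltnNge leqW ?leq_addr //= subSn ?leq_addr // addKn /=.
move: uq; rewrite /reset_top /advance hit e /= inE andbT => g01.
exact: reset_stack_board.
Qed.

Definition trace_board t : board A U C :=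
  match (t %% 3)%N with 0 => run_in (t %/ 3) | 1 => run_mid (t %/ 3) | _ => run_out (t %/ 3) end.
Definition trace_set t := if (t %% 3 == 0)%N then mdom (tau (t %/ 3)) else mcod (tau (t %/ 3)).
Definition trace_index n := (n * 3)%N.

Lemma divmod3 n r : (r < 3)%N -> (n * 3 + r) %/ 3 = n /\ (n * 3 + r) %% 3 = r.
Proof. by move=> lt_r; rewrite divnMDl // modnMDl modn_small // divn_small // addn0. Qed.

Lemma trace_boardE n : [/\ trace_board (n * 3) = run_in n, trace_board (n * 3).+1 = run_mid n,
  trace_board (n * 3).+2 = run_out n & trace_board (n * 3).+3 = run_in n.+1].
Proof.
have [q0 r0] := divmod3 n (r := 0) isT; have [q1 r1] := divmod3 n (r := 1) isT.
have [q2 r2] := divmod3 n (r := 2) isT; have [q3 r3] := divmod3 n.+1 (r := 0) isT.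
rewrite addn0 in q0 r0; rewrite addn0 in q3 r3; rewrite addn1 in q1 r1; rewrite addn2 in q2 r2.
have e3 : (n * 3).+3 = (n.+1 * 3)%N by rewrite mulSn; lia.
by rewrite /trace_board e3 q0 r0 q1 r1 q2 r2 q3 r3.
Qed.

Lemma trace_setE n : [/\ trace_set (n * 3) = mdom (tau n), trace_set (n * 3).+1 = mcod (tau n)
  & trace_set (n * 3).+2 = mcod (tau n)].
Proof.
have [q0 r0] := divmod3 n (r := 0) isT; have [q1 r1] := divmod3 n (r := 1) isT.
have [q2 r2] := divmod3 n (r := 2) isT.
rewrite addn0 in q0 r0; rewrite addn1 in q1 r1; rewrite addn2 in q2 r2.
by rewrite /trace_set q0 r0 q1 r1 q2 r2.
Qed.

Lemma trace_index_decomp t : exists n r, (r < 3)%N /\ t = (n * 3 + r)%N.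
Proof. by exists (t %/ 3), (t %% 3); rewrite ltn_pmod // -divn_eq. Qed.

Lemma trace_is_run : is_run alpha tau trace_board trace_index trace_set.
Proof.
split=> [n|]; first by rewrite /trace_index; lia.
split=> [t|].
  have [n [[|[|[|r]]] [// _ ->]]] := trace_index_decomp t;
    have [B0 B1 B2 _] := trace_boardE n; have [X0 X1 X2] := trace_setE n.
  - by rewrite addn0 B0 X0; apply: is_board_run_in.
  - by rewrite addn1 B1 X1; apply: is_board_run_mid.
  - by rewrite addn2 B2 X2; apply: is_board_run_out.
split=> [n|t not_tau].
  have [B0 B1 _ _] := trace_boardE n; have [X0 X1 _] := trace_setE n.
  by rewrite /trace_index B0 B1 X0 X1; do 2 split=> //; apply: succ_step_run.
have [n [[|[|[|r]]] [// _ et]]] := trace_index_decomp t; subst t;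
  have [B0 B1 B2 B3] := trace_boardE n; have [X0 X1 X2] := trace_setE n.
- by case: (not_tau n); rewrite addn0.
- by rewrite addn1 B1 B2 X1 X2; split=> //; left; apply: weak_step_run.
- have e3 : (n * 3).+3 = (n.+1 * 3)%N by rewrite mulSn; lia.
  have [X0' _ _] := trace_setE n.+1.
  rewrite addn2 B2 B3 X2 e3 X0' -tau_path; split=> //.
  exact: run_out_step.
Qed.

Lemma trace_run_accepting : accepting trace_board trace_index.
Proof.
have [j0 [gam single]] := state_eventually_single.
exists ((k 0 + j0) * 3)%N, gam; split=> [t le_t|m].
  have [n [r [lt_r et]]] := trace_index_decomp t; subst t.
  have [B0 B1 B2 _] := trace_boardE n.
  have le_n : (k 0 <= n)%N by lia.
  have e_n : (state (n - k 0)).2 = [:: gam] by apply: single; lia.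
  rewrite /run_in /run_mid /run_out ltnNge le_n /= in B0 B1 B2.
  case: r lt_r le_t => [|[|[|r]]] // _ _.
  - by rewrite addn0 B0 /= e_n mem_head.
  - by rewrite addn1 B1 /= mem_cat e_n mem_head.
  - by rewrite addn2 B2 /= /advance; case: ifP => _; rewrite e_n ?mem_head.
have [j le_j hit] := hits_alpha_unbounded (maxn m j0).
exists ((k 0 + j) * 3).+2; split; first by move: le_j; rewrite geq_max; lia.
split=> [n'|]; first by rewrite /trace_index; lia.
have [_ _ -> ->] := trace_boardE (k 0 + j).
by apply: reset_run_out hit _; apply: single; move: le_j; rewrite geq_max => /andP[].
Qed.
End Completeness.

Lemma completeness (disp : Order.disp_t) (A : finTBLatticeType disp)
  (alpha : A) (halpha : alpha <> Order.bottom)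
  (U : choiceType) (C : countType) (emb : nat -> C) (emb_inj : injective emb)
  (M : {fset mor A U}) (hM : forall m, m \in M -> wf_mor m)
  (tau : nat -> mor A U) (htau : forall n, tau n \in M) :
  describes_path tau -> trace_condition alpha tau -> has_accepting_run alpha C tau.
Proof.
move=> tau_path [k [s [k_lt [_ k_trace]]]].
exists (trace_board emb k_lt k_trace), trace_index, (trace_set tau).
by split; [exact: (trace_is_run halpha emb_inj hM htau tau_path) | exact: trace_run_accepting].
Qed.

Theorem mainTheorem4 (disp : Order.disp_t) (A : finTBLatticeType disp)
  (alpha : A) (halpha : alpha <> Order.bottom)
  (U : choiceType) (C : countType) (emb : nat -> C) (emb_inj : injective emb)
  (M : {fset mor A U}) (hM : forall m, m \in M -> wf_mor m)
  (tau : nat -> mor A U) (htau : forall n, tau n \in M) :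
  has_accepting_run alpha C tau <->
  (describes_path tau /\ trace_condition alpha tau).
Proof.
split; first exact: (soundness halpha hM htau).
by case; apply: (completeness halpha emb_inj hM htau).
Qed.
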